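(* For all $t_1, t_2 \in \mathcal{L}_r$, $t_1 =_{\mathcal{L}} t_2$ if and only if $t_1 = t_2$ (i.e. they have the same set of sublevels).
   Context: $\mathcal{X}$ is a countable set of variables; a valuation is $\sigma\colon\mathcal{X}\to\mathbb{N}$. For finite $E\subseteq\mathcal{X}$, $x\in\mathcal{X}$, $S\in\mathbb{N}$, the sublevels $A(E,x,S)$ and $B(E,S)$ have values $[A(E,x,S)]_\sigma = 0$ if some $y\in E$ has $\sigma(y)=0$, and $\sigma(x)+S$ otherwise; $[B(E,S)]_\sigma=0$ if some $y\in E$ has $\sigma(y)=0$, and $S$ otherwise. $\mathcal{L}_s$ is the set of sublevels $A(E,x,S)$ with $x\in E$ and $B(E,S)$ with $S>0$. $t_1\leqslant_{\mathcal{L}} t_2$ (resp. $t_1 =_{\mathcal{L}} t_2$) means $[t_1]_\sigma\le[t_2]_\sigma$ (resp. $=$) for every valuation $\sigma$; $\max$ of a finite family is evaluated pointwise (empty max has value $0$). Two sublevels $u,v$ are incomparable if neither $u\leqslant_{\mathcal{L}} v$ nor $v\leqslant_{\mathcal{L}} u$. A minimal representation is a formal expression $\max(u_1,\ldots,u_n)$ where $\{u_1,\ldots,u_n\}$ is a finite set of pairwise incomparable elements of $\mathcal{L}_s$; $\mathcal{L}_r$ is the set of minimal representations. *)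

From Stdlib Require List.
From mathcomp Require Import all_boot finmap.
Set Implicit Arguments. Unset Strict Implicit. Unset Printing Implicit Defensive.
Local Open Scope fset_scope.

Inductive sublevel (X : countType) : Type :=
| SA of {fset X} & X & nat
| SB of {fset X} & nat.

Definition eval_sub (X : countType) (sigma : X -> nat) (u : sublevel X) : nat :=
  match u with
  | SA E x n => if has (fun y => sigma y == 0) E then 0 else addn (sigma x) n
  | SB E n => if has (fun y => sigma y == 0) E then 0 else n
  end.

Definition in_Ls (X : countType) (u : sublevel X) : Prop :=
  match u with
  | SA E x _ => x \in E
  | SB _ n => leq 1 n
  end.

Definition leL (X : countType) (u v : sublevel X) : Prop :=
  forall sigma : X -> nat, leq (eval_sub sigma u) (eval_sub sigma v).

Definition incomparable (X : countType) (u v : sublevel X) : Prop :=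
  ~ leL u v /\ ~ leL v u.

(* A formal max(u_1,...,u_n) is given by a list of sublevels (only the
   underlying set matters); its value is the pointwise max (0 if empty). *)
Definition eval_max (X : countType) (sigma : X -> nat) (t : seq (sublevel X)) : nat :=
  foldr maxn 0%N (map (eval_sub sigma) t).

Definition in_Lr (X : countType) (t : seq (sublevel X)) : Prop :=
  (forall u, List.In u t -> in_Ls u) /\
  (forall u v, List.In u t -> List.In v t -> u <> v -> incomparable u v).

Definition eqL (X : countType) (t1 t2 : seq (sublevel X)) : Prop :=
  forall sigma : X -> nat, eval_max sigma t1 = eval_max sigma t2.

Definition same_set (X : countType) (t1 t2 : seq (sublevel X)) : Prop :=
  forall u, List.In u t1 <-> List.In u t2.

From mathcomp Require Import all_boot finmap zify.
From Stdlib Require Import Classical_Prop.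
Set Implicit Arguments. Unset Strict Implicit.

(* Every sublevel u of t1 is below max t2, and a well-chosen probe valuation
   (very large on the variable of u, 1 on the rest of its support, 0 elsewhere)
   forces the maximum to be reached by a single v of t2 with u <=_L v.
   Symmetrically v <=_L w for some w of t1; incomparability within t1 gives
   w = u, and <=_L is antisymmetric on L_s, so u = v lies in t2. *)

Section Sublevels.

Variable X : countType.
Implicit Types (u v w : sublevel X) (t : seq (sublevel X)) (sigma tau : X -> nat).
Implicit Types (E : {fset X}) (x : X) (n K N : nat).

Definition supp u : {fset X} := match u with SA E _ _ | SB E _ => E end.

Definition body sigma u : nat :=
  match u with SA _ x n => sigma x + n | SB _ n => n end.

Lemma eval_subE sigma u :
  eval_sub sigma u = if has (fun y => sigma y == 0) (supp u) then 0 else body sigma u.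
Proof. by case: u. Qed.

Lemma eval_sub_le_body sigma u : eval_sub sigma u <= body sigma u.
Proof. by rewrite eval_subE; case: ifP. Qed.

Lemma eval_sub_pos sigma u : (forall z, 0 < sigma z) -> eval_sub sigma u = body sigma u.
Proof.
move=> sigma_gt0; rewrite eval_subE ifN //; apply/hasPn => z _.
by rewrite -lt0n sigma_gt0.
Qed.

Lemma supp_sub_eval_gt0 sigma (E : {fset X}) u :
  (forall z, z \notin E -> sigma z = 0) -> 0 < eval_sub sigma u ->
  {subset supp u <= E}.
Proof.
move=> sigma0 + z zu; rewrite eval_subE; case: ifP => // /negbT/hasPn/(_ z zu) sz _.
by apply: contraNT sz => /sigma0 ->.
Qed.

Lemma leL_intro u v :
  {subset supp v <= supp u} ->
  (forall tau, ~~ has (fun y => tau y == 0) (supp u) -> body tau u <= body tau v) ->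
  leL u v.
Proof.
move=> sub le_body tau; rewrite !eval_subE; case: ifP => // /negbT tau_u.
rewrite ifN ?le_body //; apply: contra tau_u => /hasP[z /sub zu tz0].
by apply/hasP; exists z.
Qed.

Lemma leL_trans u v w : leL u v -> leL v w -> leL u w.
Proof. by move=> uv vw sigma; apply: leq_trans (uv sigma) (vw sigma). Qed.

Definition indicator (E : {fset X}) : X -> nat := fun z => z \in E.

Lemma eval_indicator_supp_gt0 u : in_Ls u -> 0 < eval_sub (indicator (supp u)) u.
Proof.
by case: u => [E x n|E n] /= u_Ls; rewrite ifN ?/indicator ?u_Ls //; apply/hasPn => z ->.
Qed.

Lemma leL_supp u v : in_Ls u -> leL u v -> {subset supp v <= supp u}.
Proof.
move=> u_Ls uv; apply: (@supp_sub_eval_gt0 (indicator (supp u))).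
  by move=> z /negbTE; rewrite /indicator => ->.
exact: leq_trans (eval_indicator_supp_gt0 u_Ls) (uv _).
Qed.

Definition spike x K : X -> nat := fun z => if z == x then K else 1.

Lemma eval_spike x K u : 0 < K -> eval_sub (spike x K) u = body (spike x K) u.
Proof. by move=> K_gt0; apply: eval_sub_pos => z; rewrite /spike; case: ifP. Qed.

Lemma leL_body1 u v : leL u v -> body (fun=> 1) u <= body (fun=> 1) v.
Proof. by move/(_ (fun=> 1)); rewrite !eval_sub_pos. Qed.

Lemma not_leL_SA_SB E x n E' n' : ~ leL (SA E x n) (SB E' n').
Proof. by move/(_ (spike x n'.+1)); rewrite !eval_spike //= /spike eqxx; lia. Qed.

Lemma leL_SA_var E x n E' x' n' : leL (SA E x n) (SA E' x' n') -> x' = x.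
Proof.
move/(_ (spike x n'.+2)); rewrite !eval_spike //= /spike eqxx.
by case: eqP => // _; lia.
Qed.

Lemma leL_antisym u v : in_Ls u -> in_Ls v -> leL u v -> leL v u -> u = v.
Proof.
move=> u_Ls v_Ls uv vu.
have supp_uv : supp u = supp v.
  apply/fsetP => y; apply/idP/idP.
  - exact: (leL_supp v_Ls vu).
  - exact: (leL_supp u_Ls uv).
have : body (fun=> 1) u = body (fun=> 1) v by apply/eqP; rewrite eqn_leq !leL_body1.
case: u v uv vu supp_uv {u_Ls v_Ls} => [E x n|E n] [E' x' n'|E' n'] //= uv vu -> body_eq.
- by rewrite (leL_SA_var uv); congr SA; lia.
- by case: (not_leL_SA_SB uv).
- by case: (not_leL_SA_SB vu).
- by rewrite body_eq.
Qed.

Definition probe u N : X -> nat :=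
  match u with
  | SA E x _ => fun z => if z == x then N else indicator E z
  | SB E _ => indicator E
  end.

Lemma leL_SA_of_probe E x n v N :
  x \in E -> in_Ls v -> eval_sub (fun=> 1) v < N ->
  eval_sub (probe (SA E x n) N) (SA E x n) <= eval_sub (probe (SA E x n) N) v ->
  leL (SA E x n) v.
Proof.
move=> xE v_Ls v_small; set sigma := probe _ N.
have N_gt0 : 0 < N := leq_ltn_trans (leq0n _) v_small.
have sigma0 z : z \notin E -> sigma z = 0.
  move=> zNE; rewrite /sigma /= /indicator (negbTE zNE).
  by case: eqP => // zx; rewrite zx xE in zNE.
have sigma_E : ~~ has (fun y => sigma y == 0) E.
  by apply/hasPn => z zE; rewrite /sigma /= /indicator zE; case: (z == x); rewrite // -lt0n.
have sigma_x : sigma x = N by rewrite /sigma /= eqxx.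
rewrite /= (negbTE sigma_E) sigma_x => le_v.
have /(supp_sub_eval_gt0 sigma0) vE : 0 < eval_sub sigma v by apply: leq_trans _ le_v; lia.
have := eval_sub_le_body sigma v; move: v_small; rewrite eval_sub_pos //.
case: v v_Ls vE le_v => [E' x' n'|E' n'] /= x'E' vE le_v v_small le_body;
  move: (leq_trans le_v le_body) => {le_v le_body}; last by lia.
rewrite /sigma /=; case: eqP => [-> le_n | _]; last by rewrite /indicator; case: (_ \in _); lia.
by apply: leL_intro => // tau _ /=; lia.
Qed.

Lemma leL_SB_of_probe E n v N :
  0 < n -> in_Ls v ->
  eval_sub (probe (SB E n) N) (SB E n) <= eval_sub (probe (SB E n) N) v ->
  leL (SB E n) v.
Proof.
move=> n_gt0 v_Ls; set sigma := probe _ N.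
have sigma0 z : z \notin E -> sigma z = 0 by rewrite /sigma /= /indicator => /negbTE ->.
have sigma_E : ~~ has (fun y => sigma y == 0) E.
  by apply/hasPn => z zE; rewrite /sigma /= /indicator zE.
rewrite /= (negbTE sigma_E) => le_v.
have /(supp_sub_eval_gt0 sigma0) vE := leq_trans n_gt0 le_v.
have := leq_trans le_v (eval_sub_le_body sigma v).
case: v v_Ls vE {le_v} => [E' x' n'|E' n'] /= x'E' vE le_body;
  apply: leL_intro => // tau tau_E /=.
have /hasPn/(_ x' (vE _ x'E')) := tau_E; rewrite /sigma /= /indicator vE // in le_body.
lia.
Qed.

Lemma probe_self_gt0 u N : in_Ls u -> 0 < N -> 0 < eval_sub (probe u N) u.
Proof.
case: u => [E x n|E n] /= u_Ls N_gt0; rewrite ifN /indicator.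
- by rewrite eqxx addn_gt0 N_gt0.
- by apply/hasPn => z zE; rewrite zE; case: (z == x); rewrite // -lt0n.
- by [].
- by apply/hasPn => z ->.
Qed.

Lemma leL_of_probe u v N :
  in_Ls u -> in_Ls v -> eval_sub (fun=> 1) v < N ->
  eval_sub (probe u N) u <= eval_sub (probe u N) v -> leL u v.
Proof.
case: u => [E x n|E n] /= u_Ls v_Ls v_small.
  exact: leL_SA_of_probe.
exact: leL_SB_of_probe.
Qed.

Lemma eval_max_ge sigma t u : List.In u t -> eval_sub sigma u <= eval_max sigma t.
Proof. by elim: t => //= v t IH [->|/IH]; rewrite /eval_max /=; lia. Qed.

Lemma eval_max_le sigma t m :
  (forall u, List.In u t -> eval_sub sigma u <= m) -> eval_max sigma t <= m.
Proof.
elim: t => [|v t IH] le_m //; rewrite /eval_max /= geq_max le_m /=; last by left.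
by apply: IH => u ut; apply: le_m; right.
Qed.

Lemma eval_max_attained sigma t :
  0 < eval_max sigma t -> exists2 v, List.In v t & eval_sub sigma v = eval_max sigma t.
Proof.
elim: t => [|v t IH] //; rewrite /eval_max /= => max_gt0.
case: (leqP (eval_max sigma t) (eval_sub sigma v)) => [le_v | lt_v].
  by exists v; [left | rewrite /eval_max in le_v *; lia].
have [|w wt w_max] := IH; first by rewrite /eval_max in lt_v *; lia.
by exists w; [right | rewrite w_max /eval_max in lt_v *; lia].
Qed.

Lemma leL_member_of_le_eval_max u t :
  in_Ls u -> (forall v, List.In v t -> in_Ls v) ->
  (forall sigma, eval_sub sigma u <= eval_max sigma t) ->
  exists2 v, List.In v t & leL u v.
Proof.
move=> u_Ls t_Ls le_max.
pose N := (eval_max (fun=> 1) t).+1; pose sigma := probe u N.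
have max_gt0 : 0 < eval_max sigma t :=
  leq_trans (probe_self_gt0 u_Ls (ltn0Sn _)) (le_max sigma).
have [v vt v_max] := eval_max_attained max_gt0; exists v => //.
apply: (leL_of_probe (N := N) u_Ls (t_Ls v vt)); first by rewrite ltnS eval_max_ge.
by rewrite v_max le_max.
Qed.

Lemma eval_max_sub sigma t1 t2 :
  (forall u, List.In u t1 -> List.In u t2) -> eval_max sigma t1 <= eval_max sigma t2.
Proof. by move=> sub; apply: eval_max_le => u /sub; apply: eval_max_ge. Qed.

Lemma eqL_Lr_sub t1 t2 :
  in_Lr t1 -> in_Lr t2 -> eqL t1 t2 -> forall u, List.In u t1 -> List.In u t2.
Proof.
move=> [t1_Ls t1_inc] [t2_Ls _] eq12 u ut1.
have [v vt2 uv] : exists2 v, List.In v t2 & leL u v.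
  apply: leL_member_of_le_eval_max (t1_Ls u ut1) t2_Ls _ => sigma.
  by rewrite -eq12 eval_max_ge.
have [w wt1 vw] : exists2 w, List.In w t1 & leL v w.
  apply: leL_member_of_le_eval_max (t2_Ls v vt2) t1_Ls _ => sigma.
  by rewrite eq12 eval_max_ge.
have wu : w = u.
  apply: NNPP => w_neq_u; case: (t1_inc u w ut1 wt1 (nesym w_neq_u)) => not_uw _.
  exact: not_uw (leL_trans uv vw).
by subst w; rewrite (leL_antisym (t1_Ls u ut1) (t2_Ls v vt2) uv vw).
Qed.

End Sublevels.

Theorem proposition33 (X : countType) (t1 t2 : seq (sublevel X)) :
  in_Lr t1 -> in_Lr t2 -> (eqL t1 t2 <-> same_set t1 t2).
Proof.
move=> Lr1 Lr2; split => [eq12 u | same sigma].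
  by split; apply: eqL_Lr_sub => // sigma; rewrite eq12.
by apply/eqP; rewrite eqn_leq !eval_max_sub // => u /same.
Qed.
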